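(* Let $\mathbf C$ be a topological category, $G$ a topologised group and $U\to G$ an open normal subgroup. Then $\mathfrak z(G/U)\cong\mathfrak zG/\mathfrak zU$ as groups (via the map induced by $\mathfrak z$ of the projection).
   Context: A concrete category is a category $\mathbf C$ with a faithful functor $\mathfrak z:\mathbf C\to\mathbf{Set}$; it admits discrete objects if it has finite limits and $\mathfrak z$ has a fully faithful left adjoint $\mathbf F$. An object $X$ is discrete if $\mathfrak z:\mathrm{Hom}(X,Y)\to\mathrm{Hom}_{\mathbf{Set}}(\mathfrak zX,\mathfrak zY)$ is bijective for all $Y$. $\mathbf C$ is topological if $\mathbf F$ commutes with finite limits and for every discrete $D$ and all $X,Y$ the natural map $\mathrm{Hom}(D\times X,Y)\to\mathrm{Hom}_{\mathbf{Set}}(\mathfrak zD,\mathrm{Hom}(X,Y))$ is bijective. A topologised group is a group object in $\mathbf C$. A morphism $N\to G$ of topologised groups is normal if its cokernel $G\to G/N$ exists in the category of topologised groups and has kernel exactly $N\to G$; it is an open normal subgroup if moreover $G/N$ is discrete. *)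

Set Implicit Arguments.
Unset Strict Implicit.

(* A category C together with a faithful functor z : C -> Set (Set = Type). *)
Record ConcCat := {
  Ob : Type;
  Hom : Ob -> Ob -> Type;
  comp : forall X Y Z : Ob, Hom Y Z -> Hom X Y -> Hom X Z;
  idm : forall X : Ob, Hom X X;
  comp_assoc : forall X Y Z W (h : Hom Z W) (g : Hom Y Z) (f : Hom X Y),
      comp h (comp g f) = comp (comp h g) f;
  comp_id_l : forall X Y (f : Hom X Y), comp (idm Y) f = f;
  comp_id_r : forall X Y (f : Hom X Y), comp f (idm X) = f;
  zO : Ob -> Type;
  zH : forall X Y : Ob, Hom X Y -> zO X -> zO Y;
  zH_id : forall X (x : zO X), zH (idm X) x = x;
  zH_comp : forall X Y Z (g : Hom Y Z) (f : Hom X Y) (x : zO X),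
      zH (comp g f) x = zH g (zH f x);
  zH_faithful : forall X Y (f g : Hom X Y), zH f = zH g -> f = g
}.
Arguments Hom : clear implicits.
Arguments comp {c X Y Z}.
Arguments idm {c}.
Arguments zO {c}.
Arguments zH {c X Y}.

Definition injective_map {A B : Type} (f : A -> B) := forall a a', f a = f a' -> a = a'.
Definition surjective_map {A B : Type} (f : A -> B) := forall b, exists a, f a = b.
Definition bijective_map {A B : Type} (f : A -> B) := injective_map f /\ surjective_map f.

Record FinLim (C : ConcCat) := {
  term : Ob C;
  bang : forall X, Hom C X term;
  bang_uniq : forall X (f : Hom C X term), f = bang X;
  prod : Ob C -> Ob C -> Ob C;
  pr1 : forall X Y, Hom C (prod X Y) X;
  pr2 : forall X Y, Hom C (prod X Y) Y;
  pair : forall Z X Y, Hom C Z X -> Hom C Z Y -> Hom C Z (prod X Y);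
  pr1_pair : forall Z X Y (f : Hom C Z X) (g : Hom C Z Y), comp (pr1 X Y) (pair f g) = f;
  pr2_pair : forall Z X Y (f : Hom C Z X) (g : Hom C Z Y), comp (pr2 X Y) (pair f g) = g;
  pair_uniq : forall Z X Y (h : Hom C Z (prod X Y)),
      h = pair (comp (pr1 X Y) h) (comp (pr2 X Y) h);
  eqz : forall X Y, Hom C X Y -> Hom C X Y -> Ob C;
  eqz_m : forall X Y (f g : Hom C X Y), Hom C (eqz f g) X;
  eqz_eq : forall X Y (f g : Hom C X Y), comp f (eqz_m f g) = comp g (eqz_m f g);
  eqz_univ : forall X Y (f g : Hom C X Y) Z (h : Hom C Z X),
      comp f h = comp g h -> exists! u : Hom C Z (eqz f g), comp (eqz_m f g) u = h
}.
Arguments term {C}.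
Arguments bang {C f0} X : rename.
Arguments prod {C f0} : rename.
Arguments pr1 {C f0 X Y} : rename.
Arguments pr2 {C f0 X Y} : rename.
Arguments pair {C f0 Z X Y} : rename.

(* ---------- Left adjoint F of z, given by universal arrows eta_S : S -> z(F S) ---------- *)
Record LeftAdj (C : ConcCat) := {
  Fo : Type -> Ob C;
  eta : forall S : Type, S -> zO (Fo S);
  lift : forall (S : Type) (Y : Ob C), (S -> zO Y) -> Hom C (Fo S) Y;
  lift_eq : forall S Y (f : S -> zO Y) (s : S), zH (lift f) (eta s) = f s;
  lift_uniq : forall S Y (f : S -> zO Y) (g : Hom C (Fo S) Y),
      (forall s, zH g (eta s) = f s) -> g = lift f
}.
Arguments Fo {C}.
Arguments eta {C l S}.
Arguments lift {C l S Y}.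

Definition Fh {C : ConcCat} (A : LeftAdj C) {S T : Type} (f : S -> T) : Hom C (Fo A S) (Fo A T) :=
  @lift C A S (Fo A T) (fun s => eta (f s)).

Definition F_fully_faithful {C : ConcCat} (A : LeftAdj C) : Prop :=
  forall S T : Type, bijective_map (@Fh C A S T).

(* A concrete category admitting discrete objects. *)
Record DCat := {
  dc :> ConcCat;
  lim : FinLim dc;
  adj : LeftAdj dc;
  adj_ff : F_fully_faithful adj
}.

Section DCatDefs.
Variable C : DCat.
Local Notation L := (lim C).
Local Notation A := (adj C).
Local Notation term := (@term C (lim C)).
Local Notation bang := (@bang C (lim C)).
Local Notation prod := (@prod C (lim C)).
Local Notation pr1 := (@pr1 C (lim C) _ _).
Local Notation pr2 := (@pr2 C (lim C) _ _).
Local Notation pair := (@pair C (lim C) _ _ _).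
Local Notation "g \oc f" := (comp g f) (at level 40, left associativity).

Definition discrete (X : Ob C) : Prop :=
  forall Y : Ob C, bijective_map (@zH C X Y).

Definition is_terminal (T : Ob C) : Prop := forall X : Ob C, exists! f : Hom C X T, True.
Definition is_product (P X Y : Ob C) (p1 : Hom C P X) (p2 : Hom C P Y) : Prop :=
  forall Z (f : Hom C Z X) (g : Hom C Z Y), exists! u : Hom C Z P, p1 \oc u = f /\ p2 \oc u = g.
Definition is_equalizer (E X Y : Ob C) (e : Hom C E X) (f g : Hom C X Y) : Prop :=
  f \oc e = g \oc e /\
  forall Z (h : Hom C Z X), f \oc h = g \oc h -> exists! u : Hom C Z E, e \oc u = h.

Definition F_preserves_finite_limits : Prop :=
  is_terminal (Fo A unit) /\
  (forall S T : Type, is_product (Fh A (@fst S T)) (Fh A (@snd S T))) /\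
  (forall (S T : Type) (f g : S -> T),
      is_equalizer (Fh A (@proj1_sig S (fun x => f x = g x))) (Fh A f) (Fh A g)).

(* The natural map Phi : Hom(D x X, Y) -> Hom_Set(zD, Hom(X,Y)),
   Phi(h)(d) = h o <c_d, id_X>, where c_d : X -> D is the (unique, as z is
   faithful) morphism with z(c_d) constantly d.  "Phi is bijective" is
   expressed as: every g has exactly one h with Phi(h) = g. *)
Definition Phi_rel (D X Y : Ob C) (h : Hom C (prod D X) Y) (g : zO D -> Hom C X Y) : Prop :=
  forall (d : zO D) (c : Hom C X D), (forall x, zH c x = d) -> h \oc pair c (idm X) = g d.

Definition topological : Prop :=
  F_preserves_finite_limits /\
  forall D X Y : Ob C, discrete D ->
    forall g : zO D -> Hom C X Y, exists! h : Hom C (prod D X) Y, Phi_rel h g.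

(* ---------- Topologised groups = group objects in C ---------- *)
Record GrpObj := {
  gob :> Ob C;
  gmul : Hom C (prod gob gob) gob;
  gone : Hom C term gob;
  ginv : Hom C gob gob;
  gassoc : gmul \oc pair (gmul \oc pr1) pr2
           = gmul \oc pair (pr1 \oc pr1) (gmul \oc pair (pr2 \oc pr1) pr2);
  gone_l : gmul \oc pair (gone \oc bang gob) (idm gob) = idm gob;
  gone_r : gmul \oc pair (idm gob) (gone \oc bang gob) = idm gob;
  ginv_l : gmul \oc pair ginv (idm gob) = gone \oc bang gob;
  ginv_r : gmul \oc pair (idm gob) ginv = gone \oc bang gob
}.

Definition is_gmor (G H : GrpObj) (f : Hom C G H) : Prop :=
  f \oc gmul G = gmul H \oc pair (f \oc pr1) (f \oc pr2).

Definition triv (G H : GrpObj) : Hom C G H := gone H \oc bang G.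

Definition is_cokernel (N G Q : GrpObj) (n : Hom C N G) (q : Hom C G Q) : Prop :=
  is_gmor q /\ q \oc n = triv N Q /\
  forall (H : GrpObj) (f : Hom C G H), is_gmor f -> f \oc n = triv N H ->
    exists! u : Hom C Q H, is_gmor u /\ u \oc q = f.

Definition is_kernel (N G Q : GrpObj) (q : Hom C G Q) (n : Hom C N G) : Prop :=
  is_gmor n /\ q \oc n = triv N Q /\
  forall (K : GrpObj) (f : Hom C K G), is_gmor f -> q \oc f = triv K Q ->
    exists! u : Hom C K N, is_gmor u /\ n \oc u = f.

(* n is an open normal subgroup, witnessed by the cokernel q : G -> G/N. *)
Definition open_normal_with (N G Q : GrpObj) (n : Hom C N G) (q : Hom C G Q) : Prop :=
  is_gmor n /\ is_cokernel n q /\ is_kernel q n /\ discrete Q.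

(* Elements of zY correspond to morphisms F(unit) -> Y. *)
Definition pt {Y : Ob C} (y : zO Y) : Hom C (Fo A unit) Y := lift (fun _ : unit => y).
Definition zpair {X Y : Ob C} (a : zO X) (b : zO Y) : zO (prod X Y) :=
  zH (pair (pt a) (pt b)) (eta tt).
Definition zterm : zO term := zH (bang (Fo A unit)) (eta tt).

Definition zmul (G : GrpObj) (a b : zO G) : zO G := zH (gmul G) (zpair a b).
Definition zone (G : GrpObj) : zO G := zH (gone G) zterm.
Definition zinv (G : GrpObj) (a : zO G) : zO G := zH (ginv G) a.

(* z(q) : zG -> zQ induces an isomorphism of groups zG / z(N) ~ zQ, where
   z(N) stands for the image of z(n) : zN -> zG:  z(q) is a group
   homomorphism, it is surjective, and its kernel is exactly the image of z(n). *)
Definition induces_quotient_iso (N G Q : GrpObj) (n : Hom C N G) (q : Hom C G Q) : Prop :=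
  (forall a b : zO G, zH q (zmul a b) = zmul (zH q a) (zH q b)) /\
  (forall y : zO Q, exists a : zO G, zH q a = y) /\
  (forall a : zO G, zH q a = zone Q <-> exists u : zO N, zH n u = a).

End DCatDefs.

(* The underlying set functor z turns a topologised group G into an honest
   group zG (its points are the morphisms out of the discrete point F(unit)),
   and z(q) of the projection q : G -> G/U is a group homomorphism.  The
   theorem then splits into two statements about z(q):

   - z(q) is surjective.  Its image I is a subgroup of z(G/U); since G/U is
     discrete, the set map "identity on I, constant 1 off I" is a morphism r,
     and the equalizer of id and r is a subgroup object with points I.  The
     projection q factors through it, and the universal property of the
     cokernel forces the inclusion to be an isomorphism, so I is everything.
   - The kernel of z(q) is the image of z(U): the equalizer of q and the
     trivial map is a subgroup object with exactly those points, and it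
     factors through U because U -> G is a kernel of q.

   Only the finite limits of C, the discreteness of G/U
   and the (co)kernel properties are used, not the topological hypothesis. *)
From Corelib Require Import ssreflect.
From Stdlib Require Import ClassicalEpsilon FunctionalExtensionality.
Set Implicit Arguments.
Unset Strict Implicit.

Section TopologisedGroups.
Variable C : DCat.
Local Notation term := (@term C (lim C)).
Local Notation bang := (@bang C (lim C)).
Local Notation prod := (@prod C (lim C)).
Local Notation pr1 := (@pr1 C (lim C) _ _).
Local Notation pr2 := (@pr2 C (lim C) _ _).
Local Notation pair := (@pair C (lim C) _ _ _).
Local Notation "g \oc f" := (comp g f) (at level 40, left associativity).

Lemma zH_pt (X : Ob C) (x : zO X) : zH (pt x) (eta tt) = x.
Proof. exact: lift_eq. Qed.

Lemma comp_pt (X Y : Ob C) (h : Hom C X Y) (x : zO X) : h \oc pt x = pt (zH h x).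
Proof. apply: lift_uniq => [[]]. by rewrite zH_comp zH_pt. Qed.

Lemma zH_pair (Z X Y : Ob C) (f : Hom C Z X) (g : Hom C Z Y) (x : zO Z) :
  zH (pair f g) x = zpair (zH f x) (zH g x).
Proof.
rewrite /zpair -{1}(zH_pt x) -zH_comp (pair_uniq (pair f g \oc pt x)).
by rewrite !comp_assoc pr1_pair pr2_pair !comp_pt.
Qed.

Lemma zH_pr1 (X Y : Ob C) (a : zO X) (b : zO Y) : zH pr1 (zpair a b) = a.
Proof. by rewrite /zpair -zH_comp pr1_pair zH_pt. Qed.

Lemma zH_pr2 (X Y : Ob C) (a : zO X) (b : zO Y) : zH pr2 (zpair a b) = b.
Proof. by rewrite /zpair -zH_comp pr2_pair zH_pt. Qed.

Lemma zH_bang (X : Ob C) (x : zO X) : zH (bang X) x = zterm C.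
Proof. by rewrite -(zH_pt x) -zH_comp /zterm (bang_uniq (bang X \oc pt x)). Qed.

Lemma term_pt (t : zO term) : t = zterm C.
Proof. by rewrite -(zH_bang t) -(bang_uniq (idm term)) zH_id. Qed.

Lemma zpair_eta (X Y : Ob C) (x : zO (prod X Y)) : x = zpair (zH pr1 x) (zH pr2 x).
Proof. by rewrite -zH_pair -(comp_id_r pr1) -(comp_id_r pr2) -pair_uniq zH_id. Qed.

Lemma zH_triv (G H : GrpObj C) (x : zO G) : zH (triv G H) x = zone H.
Proof. by rewrite /triv zH_comp zH_bang. Qed.

Hint Rewrite zH_comp zH_pair zH_pr1 zH_pr2 zH_id zH_bang : zsimpl.

Section PointGroup.
Variable G : GrpObj C.

Lemma zmul_assoc (a b c : zO G) : zmul (zmul a b) c = zmul a (zmul b c).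
Proof.
have := f_equal (fun h => zH h (zpair (zpair a b) c)) (gassoc G).
by autorewrite with zsimpl.
Qed.

Lemma zmul_1l (a : zO G) : zmul (zone G) a = a.
Proof. have := f_equal (fun h => zH h a) (gone_l G). by autorewrite with zsimpl. Qed.

Lemma zmul_1r (a : zO G) : zmul a (zone G) = a.
Proof. have := f_equal (fun h => zH h a) (gone_r G). by autorewrite with zsimpl. Qed.

Lemma zmul_Vl (a : zO G) : zmul (zinv a) a = zone G.
Proof. have := f_equal (fun h => zH h a) (ginv_l G). by autorewrite with zsimpl. Qed.

Lemma zmul_Vr (a : zO G) : zmul a (zinv a) = zone G.
Proof. have := f_equal (fun h => zH h a) (ginv_r G). by autorewrite with zsimpl. Qed.

Lemma idem_one (x : zO G) : zmul x x = x -> x = zone G.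
Proof. by move=> xx; rewrite -{1}(zmul_1l x) -(zmul_Vl x) zmul_assoc xx zmul_Vl. Qed.

Lemma inv_uniq (x y : zO G) : zmul y x = zone G -> y = zinv x.
Proof. by move=> yx; rewrite -(zmul_1r y) -(zmul_Vr x) -zmul_assoc yx zmul_1l. Qed.
End PointGroup.

Lemma gmor_pt (G H : GrpObj C) (f : Hom C G H) :
  is_gmor f <-> forall a b, zH f (zmul a b) = zmul (zH f a) (zH f b).
Proof.
split=> [fM a b | fM].
- have := f_equal (fun h => zH h (zpair a b)) fM. by autorewrite with zsimpl.
- apply: zH_faithful; apply: functional_extensionality => x.
  rewrite (zpair_eta x); autorewrite with zsimpl; exact: fM.
Qed.

Lemma gmor_one (G H : GrpObj C) (f : Hom C G H) : is_gmor f -> zH f (zone G) = zone H.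
Proof. by move=> /gmor_pt fM; apply: idem_one; rewrite -fM zmul_1l. Qed.

Lemma gmor_inv (G H : GrpObj C) (f : Hom C G H) (a : zO G) :
  is_gmor f -> zH f (zinv a) = zinv (zH f a).
Proof. by move=> fM; apply: inv_uniq; rewrite -(proj1 (gmor_pt f) fM) zmul_Vl gmor_one. Qed.

Lemma gmor_comp (G H K : GrpObj C) (f : Hom C G H) (g : Hom C H K) :
  is_gmor f -> is_gmor g -> is_gmor (g \oc f).
Proof. by move=> /gmor_pt fM /gmor_pt gM; apply/gmor_pt => a b; rewrite !zH_comp fM gM. Qed.

Lemma gmor_id (G : GrpObj C) : is_gmor (idm G).
Proof. by apply/gmor_pt => a b; rewrite !zH_id. Qed.

(* The equalizer of two morphisms f g : G -> Y has as points exactly the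
   points of G on which f and g agree; when these form a subgroup of zG the
   equalizer is a group object and its inclusion a group morphism. *)
Section EqualizerSubgroup.
Variables (G : GrpObj C) (Y : Ob C) (f g : Hom C G Y).

Definition agree (x : zO G) : Prop := zH f x = zH g x.
Definition EqObj : Ob C := eqz (lim C) f g.
Definition emb : Hom C EqObj G := eqz_m (lim C) f g.

Lemma emb_agree (x : zO EqObj) : agree (zH emb x).
Proof. by rewrite /agree -!zH_comp /emb eqz_eq. Qed.

Lemma emb_mono (X : Ob C) (u1 u2 : Hom C X EqObj) : emb \oc u1 = emb \oc u2 -> u1 = u2.
Proof.
move=> e12; have fg : f \oc (emb \oc u1) = g \oc (emb \oc u1).
  by rewrite !comp_assoc /emb eqz_eq.
have [u [_ uniq]] := eqz_univ (lim C) fg.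
by rewrite -(uniq u1) // (uniq u2).
Qed.

Lemma emb_inj (a b : zO EqObj) : zH emb a = zH emb b -> a = b.
Proof.
by move=> eab; rewrite -(zH_pt a) -(zH_pt b); congr zH; apply: emb_mono; rewrite !comp_pt eab.
Qed.

Lemma emb_ext (X : Ob C) (u1 u2 : Hom C X EqObj) :
  (forall x, zH emb (zH u1 x) = zH emb (zH u2 x)) -> u1 = u2.
Proof.
by move=> e12; apply: zH_faithful; apply: functional_extensionality => x; apply: emb_inj.
Qed.

Lemma emb_surj (y : zO G) : agree y -> exists a, zH emb a = y.
Proof.
move=> ay; have fg : f \oc pt y = g \oc pt y by rewrite !comp_pt ay.
have [u [eu _]] := eqz_univ (lim C) fg.
by exists (zH u (eta tt)); rewrite -zH_comp eu zH_pt.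
Qed.

Lemma emb_factor (X : Ob C) (k : Hom C X G) :
  (forall x, agree (zH k x)) -> {k' : Hom C X EqObj | emb \oc k' = k}.
Proof.
move=> ak; apply: constructive_indefinite_description.
have fg : f \oc k = g \oc k.
  by apply: zH_faithful; apply: functional_extensionality => x; rewrite !zH_comp; apply: ak.
by have [u [eu _]] := eqz_univ (lim C) fg; exists u.
Qed.

Hypothesis agree_one : agree (zone G).
Hypothesis agree_mul : forall a b, agree a -> agree b -> agree (zmul a b).
Hypothesis agree_inv : forall a, agree a -> agree (zinv a).

Lemma mul_agree (x : zO (prod EqObj EqObj)) :
  agree (zH (gmul G \oc pair (emb \oc pr1) (emb \oc pr2)) x).
Proof. by autorewrite with zsimpl; apply: agree_mul; apply: emb_agree. Qed.

Lemma one_agree (t : zO term) : agree (zH (gone G) t).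
Proof. rewrite (term_pt t); exact: agree_one. Qed.

Lemma inv_agree (x : zO EqObj) : agree (zH (ginv G \oc emb) x).
Proof. by rewrite zH_comp; apply: agree_inv; apply: emb_agree. Qed.

Definition mulE : Hom C (prod EqObj EqObj) EqObj := proj1_sig (emb_factor mul_agree).
Definition oneE : Hom C term EqObj := proj1_sig (emb_factor one_agree).
Definition invE : Hom C EqObj EqObj := proj1_sig (emb_factor inv_agree).

Lemma emb_mul (x : zO (prod EqObj EqObj)) :
  zH emb (zH mulE x) = zmul (zH emb (zH pr1 x)) (zH emb (zH pr2 x)).
Proof. by rewrite -zH_comp /mulE (proj2_sig (emb_factor _)); autorewrite with zsimpl. Qed.

Lemma emb_one (t : zO term) : zH emb (zH oneE t) = zone G.
Proof. by rewrite -zH_comp /oneE (proj2_sig (emb_factor _)) (term_pt t). Qed.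

Lemma emb_inv (a : zO EqObj) : zH emb (zH invE a) = zinv (zH emb a).
Proof. by rewrite -zH_comp /invE (proj2_sig (emb_factor _)) zH_comp. Qed.

Hint Rewrite emb_mul emb_one emb_inv : zsimpl.

Definition SubGrp : GrpObj C.
Proof.
refine (@Build_GrpObj C EqObj mulE oneE invE _ _ _ _ _);
  apply: emb_ext => x; autorewrite with zsimpl.
- exact: zmul_assoc.
- exact: zmul_1l.
- exact: zmul_1r.
- exact: zmul_Vl.
- exact: zmul_Vr.
Defined.

Lemma emb_gmor : @is_gmor C SubGrp G emb.
Proof. by apply/gmor_pt => a b; rewrite emb_mul zH_pr1 zH_pr2. Qed.

(* emb reflects group morphisms, as it is injective on points. *)
Lemma gmor_emb_reflect (H : GrpObj C) (k : Hom C H SubGrp) :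
  is_gmor (emb \oc k) -> is_gmor k.
Proof.
move=> /gmor_pt kM; apply/gmor_pt => a b; apply: emb_inj.
by rewrite -zH_comp kM /= emb_mul zH_pr1 zH_pr2 !zH_comp.
Qed.
End EqualizerSubgroup.

Lemma discrete_predicate_agree (X : Ob C) (I : zO X -> Prop) (x0 : zO X) :
  discrete X -> I x0 -> exists r : Hom C X X, forall x, zH (idm X) x = zH r x <-> I x.
Proof.
move=> Xd Ix0.
pose retract x := if excluded_middle_informative (I x) is left _ then x else x0.
have [r rE] := proj2 (Xd X) retract.
exists r => x; rewrite zH_id rE /retract.
by case: excluded_middle_informative => Ix; split=> // ->.
Qed.

Lemma cokernel_image_agree (N G Q : GrpObj C) (n : Hom C N G) (q : Hom C G Q)
    (Y : Ob C) (f g : Hom C Q Y) (P1 : agree f g (zone Q))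
    (Pm : forall a b, agree f g a -> agree f g b -> agree f g (zmul a b))
    (Pi : forall a, agree f g a -> agree f g (zinv a)) :
  is_cokernel n q -> (forall x, agree f g (zH q x)) -> forall y, agree f g y.
Proof.
move=> [qM [qn qUniv]] aq y.
pose S := SubGrp P1 Pm Pi.
have [q' q'E] := emb_factor aq.
have q'M : @is_gmor C G S q' by apply: gmor_emb_reflect; rewrite /= q'E.
have q'n : q' \oc n = triv N S.
  apply: (emb_ext (G := Q)) => x.
  by rewrite -zH_comp comp_assoc q'E qn zH_triv /triv zH_comp (emb_one P1).
have [u [[uM uq] _]] := qUniv S q' q'M q'n.
have [v [_ vUniq]] := qUniv Q q qM qn.
have embu : emb f g \oc u = idm Q.
  have embu_v : emb f g \oc u = v.
    symmetry; apply: vUniq; split; first exact: (gmor_comp uM (emb_gmor P1 Pm Pi)).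
    by rewrite -comp_assoc uq q'E.
  have id_v : idm Q = v by symmetry; apply: vUniq; split; [exact: gmor_id | exact: comp_id_l].
  by rewrite embu_v id_v.
by rewrite -(zH_id y) -embu zH_comp; apply: emb_agree.
Qed.

Lemma discrete_cokernel_surjective (N G Q : GrpObj C) (n : Hom C N G) (q : Hom C G Q) :
  is_cokernel n q -> discrete Q -> forall y : zO Q, exists a : zO G, zH q a = y.
Proof.
move=> qcok Qd; have qgm := proj1 qcok; have qM := proj1 (gmor_pt q) qgm.
pose I y := exists a, zH q a = y.
have I1 : I (zone Q) by exists (zone G); apply: gmor_one.
have [r rI0] := discrete_predicate_agree Qd I1.
have rI : forall y, agree (idm Q) r y <-> I y := rI0.
have Pm : forall a b, agree (idm Q) r a -> agree (idm Q) r b -> agree (idm Q) r (zmul a b).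
  move=> a b /rI [a' <-] /rI [b' <-]; apply/rI; exists (zmul a' b'); exact: qM.
have Pi : forall a, agree (idm Q) r a -> agree (idm Q) r (zinv a).
  move=> a /rI [a' <-]; apply/rI; exists (zinv a'); exact: gmor_inv.
move=> y; apply/rI; apply: (cokernel_image_agree (proj2 (rI _) I1) Pm Pi qcok).
by move=> x; apply/rI; exists x.
Qed.

Lemma kernel_points (N G Q : GrpObj C) (n : Hom C N G) (q : Hom C G Q) :
  is_gmor q -> is_kernel q n -> forall a, zH q a = zone Q -> exists u, zH n u = a.
Proof.
move=> qM [_ [_ nUniv]] a qa.
have P1 : agree q (triv G Q) (zone G) by rewrite /agree zH_triv gmor_one.
have Pm : forall a b, agree q (triv G Q) a -> agree q (triv G Q) b ->
    agree q (triv G Q) (zmul a b).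
  by move=> x y; rewrite /agree !zH_triv (proj1 (gmor_pt q) qM) => -> ->; apply: zmul_1l.
have Pi : forall a, agree q (triv G Q) a -> agree q (triv G Q) (zinv a).
  move=> x; rewrite /agree !zH_triv gmor_inv // => ->.
  by symmetry; apply: inv_uniq; apply: zmul_1l.
have qe : q \oc emb q (triv G Q) = triv (SubGrp P1 Pm Pi) Q.
  apply: zH_faithful; apply: functional_extensionality => x.
  by rewrite zH_comp (emb_agree x) zH_triv; symmetry; apply: (zH_triv (G := SubGrp P1 Pm Pi)).
have [u [[_ nu] _]] := nUniv _ _ (emb_gmor P1 Pm Pi) qe.
have a_agree : agree q (triv G Q) a by rewrite /agree zH_triv.
have [b <-] := emb_surj a_agree.
by exists (zH u b); rewrite -zH_comp nu.
Qed.
End TopologisedGroups.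

Theorem proposition2p6 (C : DCat) (Htop : topological C)
  (G U Q : GrpObj C) (n : Hom C U G) (q : Hom C G Q)
  (Hopen : open_normal_with n q) :
  induces_quotient_iso n q.
Proof.
have [_ [qcok [nker Qd]]] := Hopen.
have qM : is_gmor q by case: qcok.
split; [exact: (proj1 (gmor_pt q) qM) | split].
- exact: discrete_cokernel_surjective qcok Qd.
- move=> a; split; first exact: kernel_points qM nker a.
  case=> u <-; rewrite -zH_comp (proj1 (proj2 qcok)); exact: zH_triv.
Qed.
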